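(* Let $1<\alpha<2$ and let $\{G(n)\}$ be a sequence of random intersection graphs satisfying conditions (A) and (PL) with this $\alpha$. Suppose that for some $\beta>\alpha-1$ we have $m=\Omega(n^\beta)$. Then there is a constant $\delta>0$ such that $\omega'(G(n))\le n^{1-\alpha/2-\delta}$ with probability tending to $1$.
   Context: Random intersection graph: given positive integers $n,m$ and a probability measure $P$ on $\{0,\dots,m\}$, $G(n,m,P)$ has vertex set $V=[n]$ and attribute set $W=\{w_1,\dots,w_m\}$; independent random subsets $S_1,\dots,S_n\subseteq W$ with $\mathbb P(S_v=S)=P(|S|)/\binom{m}{|S|}$; distinct $u,v$ adjacent iff $S_u\cap S_v\ne\emptyset$. For a sequence $G(n)=G(n,m(n),P(n))$ with $m(n)\to\infty$, $X(n)$ has law $P(n)$ and $Y(n)=(n/m)^{1/2}X(n)$. Condition (A): $\mathbb E\,Y(n)=O(1)$. Condition (PL): there are a slowly varying $L$ and $\varepsilon_0\in(0,1/2)$ such that for every sequence $x_n$ with $n^{1/2-\varepsilon_0}\le x_n\le n^{1/2+\varepsilon_0}$, $\mathbb P(Y(n)\ge x_n)\sim L(x_n)x_n^{-\alpha}$. $\omega'(G(n))=\max_{w\in W}|\{v: w\in S_v\}|$. *)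

From mathcomp Require Import all_boot.
From Stdlib Require Import Reals.
Set Implicit Arguments. Unset Strict Implicit. Unset Printing Implicit Defensive.

(* An outcome of G(n,m,P): the attribute sets S_v, v in [n], subsets of W = [m]. *)
Definition outcome (n m : nat) := {ffun 'I_n -> {set 'I_m}}.

Definition outcomeProb (n m : nat) (P : nat -> R) (f : outcome n m) : R :=
  \big[Rmult/R1]_(v < n) (Rdiv (P #|f v|) (INR 'C(m, #|f v|))).

Definition eventProb (n m : nat) (P : nat -> R) (E : pred (outcome n m)) : R :=
  \big[Rplus/R0]_(f : outcome n m | E f) outcomeProb P f.

(* omega'(G) = max_w |{v : w in S_v}|  (0 if m = 0). *)
Definition omega' (n m : nat) (f : outcome n m) : nat :=
  \max_(w : 'I_m) #|[set v : 'I_n | w \in f v]|.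

Definition is_prob_on (m : nat) (P : nat -> R) : Prop :=
  (forall k, (0 <= P k)%R) /\ (\big[Rplus/R0]_(k < m.+1) P k) = 1%R.

(* Y(n) = (n/m)^{1/2} X(n), X(n) ~ P(n). *)
Definition scaleY (n m : nat) : R := sqrt (INR n / INR m).

Definition EY (n m : nat) (P : nat -> R) : R :=
  (scaleY n m * \big[Rplus/R0]_(k < m.+1) (INR k * P k))%R.

Definition tailY (n m : nat) (P : nat -> R) (x : R) : R :=
  \big[Rplus/R0]_(k < m.+1 | if Rle_dec x (scaleY n m * INR k) then true else false) P k.

Definition asympt_eq (a b : nat -> R) : Prop := Un_cv (fun n => a n / b n)%R 1%R.

Definition slowly_varying (L : R -> R) : Prop :=
  (exists x0, forall x, (x0 < x)%R -> (0 < L x)%R) /\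
  forall t, (0 < t)%R -> forall eps, (0 < eps)%R ->
    exists M, forall x, (M < x)%R -> (Rabs (L (t * x) / L x - 1) < eps)%R.

Definition condA (m : nat -> nat) (P : nat -> nat -> R) : Prop :=
  exists C N, forall n, (N <= n)%nat -> (EY n (m n) (P n) <= C)%R.

Definition condPL (alpha : R) (m : nat -> nat) (P : nat -> nat -> R) : Prop :=
  exists (L : R -> R) (eps0 : R),
    slowly_varying L /\ (0 < eps0 < 1/2)%R /\
    forall x : nat -> R,
      (forall n, (1 <= n)%nat ->
         Rpower (INR n) (1/2 - eps0) <= x n <= Rpower (INR n) (1/2 + eps0))%R ->
      asympt_eq (fun n => tailY n (m n) (P n) (x n))
                (fun n => L (x n) * Rpower (x n) (- alpha))%R.

(* Proof idea: a moment method that only needs condition (A) and the growth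
   of m.  For an attribute w let H_w be the set
   of vertices holding it.  Each vertex holds w independently with probability
   p = E X / m, so E C(|H_w|, k) = C(n, k) p^k.  If omega' > T >= 2k then some
   |H_w| > T and k! C(|H_w|, k) >= (T/2)^k, hence by Markov's inequality
     P(omega' > T) <= m (n p)^k / (T/2)^k.
   Condition (A) gives (n p)^2 <= (n/m) C^2 and m >= c n^b gives
   n/m <= n^(1-b)/c; with T = n^e and k = 2(j+1) the bound is
   O(n^(b - g(j+1)/2)) where g = b + 1 - alpha > 0, which tends to 0 for j
   large. *)
From Stdlib Require Import Reals ZArith Lra Lia.
From mathcomp Require Import all_boot all_order all_algebra.
From mathcomp Require Import perm zify Rstruct.
Import Order.TTheory GRing.Theory Num.Theory.
Set Implicit Arguments. Unset Strict Implicit. Unset Printing Implicit Defensive.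

Lemma expn_sub_le_ffact n k : (n - k) ^ k <= n ^_ k.
Proof.
rewrite ffact_prod -[X in _ ^ X](card_ord k) -prod_nat_const.
by apply: leq_prod => i _; rewrite leq_sub2l // ltnW.
Qed.

Lemma ffact_le_expn n k : n ^_ k <= n ^ k.
Proof.
rewrite ffact_prod -[X in _ ^ X](card_ord k) -prod_nat_const.
by apply: leq_prod => i _; rewrite leq_subr.
Qed.

Local Open Scope ring_scope.

(* If c exceeds T >= 2k then k! C(c,k) >= (c - k)^k >= (T/2)^k. *)
Lemma binomial_ge_half_power (F : realFieldType) (c k : nat) (T : F) :
  2 * k%:R <= T -> T < c%:R -> (T / 2) ^+ k <= 'C(c, k)%:R * k`!%:R.
Proof.
move=> kT Tc.
have k_le_halfT : k%:R <= T / 2 by rewrite ler_pdivlMr // mulrC.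
have halfT_ge0 : 0 <= T / 2 := le_trans (ler0n F k) k_le_halfT.
have halfT_lt : T / 2 < c%:R - k%:R.
  by rewrite ltrBrDr; apply: le_lt_trans Tc; rewrite [leRHS](splitr T) lerD2l.
have ck_ge0 : 0 <= c%:R - k%:R := le_trans halfT_ge0 (ltW halfT_lt).
have k_le_c : (k <= c)%N by rewrite -(ler_nat F) -subr_ge0.
rewrite -natrM bin_ffact; apply: le_trans (_ : (c - k)%:R ^+ k <= _).
  by rewrite natrB //; apply: lerXn2r; rewrite ?nnegrE // ltW.
by rewrite -natrX ler_nat expn_sub_le_ffact.
Qed.

Section RandomAttributeSets.
Variables (F : realFieldType) (m : nat) (P : nat -> F).
Hypothesis P_ge0 : forall k, 0 <= P k.
Hypothesis P_sum : \sum_(k < m.+1) P k = 1.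

(* Law of one attribute set S_v: its size is drawn from P, and given the size
   it is uniform among the subsets of W of that size. *)
Definition setProb (S : {set 'I_m}) : F := P #|S| / 'C(m, #|S|)%:R.

Definition meanSize : F := \sum_(k < m.+1) P k * k%:R.

Lemma setProb_ge0 S : 0 <= setProb S.
Proof. by rewrite divr_ge0 // ler0n. Qed.

Lemma meanSize_ge0 : 0 <= meanSize.
Proof. by apply: sumr_ge0 => k _; rewrite mulr_ge0 // ler0n. Qed.

(* A function of |S| has the same expectation under setProb as under P:
   there are exactly C(m,k) sets of size k. *)
Lemma sum_setProb_size (g : nat -> F) :
  \sum_(S : {set 'I_m}) setProb S * g #|S| = \sum_(k < m.+1) P k * g k.
Proof.
rewrite (partition_big (fun S : {set 'I_m} => inord #|S| : 'I_m.+1) xpredT) //=.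
apply: eq_bigr => k _.
have size_eq (S : {set 'I_m}) : (inord #|S| == k :> 'I_m.+1) = (#|S| == k).
  have : (#|S| <= m)%N by rewrite -[m in (_ <= m)%N]card_ord max_card.
  by rewrite -(inj_eq val_inj) /= => /inordK ->.
transitivity (\sum_(S : {set 'I_m} | #|S| == k) P k / 'C(m, k)%:R * g k).
  by apply: eq_big => S; rewrite size_eq // /setProb => /eqP ->.
rewrite sumr_const.
have -> : #|[pred S : {set 'I_m} | #|S| == k]| = 'C(m, k).
  by rewrite -[m in 'C(m, _)]card_ord -card_draws; apply: eq_card => S; rewrite !inE.
have binom_neq0 : 'C(m, k)%:R != 0 :> F by rewrite pnatr_eq0 -lt0n bin_gt0 -ltnS.
by rewrite -mulrnAl -(mulr_natr (P k / _)) divfK.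
Qed.

Lemma sum_setProb : \sum_(S : {set 'I_m}) setProb S = 1.
Proof.
rewrite -P_sum -[LHS](eq_bigr _ (fun S _ => mulr1 (setProb S))).
by rewrite (sum_setProb_size (fun _ => 1)); apply: eq_bigr => k _; rewrite mulr1.
Qed.

(* setProb is invariant under permutations of W, so every attribute is
   contained in S_v with the same probability. *)
Lemma setProb_mem_sym (w w' : 'I_m) :
  \sum_(S : {set 'I_m} | w \in S) setProb S = \sum_(S : {set 'I_m} | w' \in S) setProb S.
Proof.
have s_inj := @perm_inj _ (tperm w w').
rewrite (reindex_inj (imset_inj s_inj)) /=.
apply: eq_big => [S | S _]; last by rewrite /setProb card_imset.
by rewrite -{1}(tpermR w w') mem_imset.
Qed.

Lemma setProb_mem (w : 'I_m) :
  \sum_(S : {set 'I_m} | w \in S) setProb S = meanSize / m%:R.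
Proof.
have m_neq0 : m%:R != 0 :> F by rewrite pnatr_eq0 -lt0n; case: w => i; case: (m).
have : \sum_(w' : 'I_m) \sum_(S : {set 'I_m} | w' \in S) setProb S = meanSize.
  rewrite (exchange_big_dep xpredT) //= /meanSize -sum_setProb_size.
  by apply: eq_bigr => S _; rewrite sumr_const mulr_natr.
rewrite (eq_bigr _ (fun w' _ => setProb_mem_sym w' w)) sumr_const card_ord => <-.
by rewrite -[X in X / _]mulr_natr mulfK.
Qed.

Variable n : nat.

Definition weight (f : {ffun 'I_n -> {set 'I_m}}) : F := \prod_(v < n) setProb (f v).

Definition holders (f : {ffun 'I_n -> {set 'I_m}}) (w : 'I_m) : {set 'I_n} :=
  [set v | w \in f v].

Lemma weight_ge0 f : 0 <= weight f.
Proof. by apply: prodr_ge0 => v _; exact: setProb_ge0. Qed.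

Lemma sum_weight : \sum_(f : {ffun 'I_n -> {set 'I_m}}) weight f = 1.
Proof.
rewrite /weight -(bigA_distr_bigA (fun _ S => setProb S)) /=.
by rewrite (eq_bigr (fun _ => 1)) ?prodr_const ?expr1n // => v _; rewrite sum_setProb.
Qed.

Lemma sum_weight_holders (A : {set 'I_n}) (w : 'I_m) :
  \sum_(f : {ffun 'I_n -> {set 'I_m}}) (if A \subset holders f w then weight f else 0)
  = (meanSize / m%:R) ^+ #|A|.
Proof.
pose factor v (S : {set 'I_m}) := if v \in A then (if w \in S then setProb S else 0)
                                   else setProb S.
transitivity (\prod_(v < n) \sum_(S : {set 'I_m}) factor v S).
  rewrite bigA_distr_bigA /=; apply: eq_bigr => f _.
  case: ifP => [/subsetP sub_holders | /subsetPn [v vA]].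
    apply: eq_bigr => v _; rewrite /factor; case: ifP => // /sub_holders.
    by rewrite inE => ->.
  by rewrite inE => wNf; rewrite (bigD1 v) //= /factor vA (negbTE wNf) mul0r.
rewrite (eq_bigr (fun v => if v \in A then meanSize / m%:R else 1)) => [|v _].
  by rewrite -big_mkcond prodr_const.
by rewrite /factor; case: ifP => _; rewrite ?sum_setProb // -(setProb_mem w) [RHS]big_mkcond.
Qed.

Lemma binomial_moment (w : 'I_m) k :
  \sum_(f : {ffun 'I_n -> {set 'I_m}}) weight f * 'C(#|holders f w|, k)%:R
  = 'C(n, k)%:R * (meanSize / m%:R) ^+ k.
Proof.
transitivity (\sum_(f : {ffun 'I_n -> {set 'I_m}}) \sum_(A : {set 'I_n} | #|A| == k)
      (if A \subset holders f w then weight f else 0)).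
  apply: eq_bigr => f _.
  rewrite -big_mkcondr /= sumr_const -cards_draws mulr_natr.
  by congr (_ *+ _); apply: eq_card => A; rewrite !inE andbC.
rewrite exchange_big /=.
rewrite (eq_bigr (fun _ => (meanSize / m%:R) ^+ k)) => [|A /eqP <-]; last first.
  exact: sum_weight_holders.
rewrite sumr_const mulr_natl -[n in 'C(n, _)]card_ord -card_draws.
by congr (_ *+ _); apply: eq_card => A; rewrite !inE.
Qed.

(* On the event omega' > T >= 2k some attribute has more than T holders, so
   k! times the sum of the k-th binomial moments is at least (T/2)^k. *)
Lemma large_omega_moment f (T : F) k : (0 < m)%N ->
  2 * k%:R <= T -> T < (omega' f)%:R ->
  (T / 2) ^+ k <= k`!%:R * \sum_(w : 'I_m) 'C(#|holders f w|, k)%:R.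
Proof.
move=> m_gt0 kT T_lt_omega.
have card_gt0 : (0 < #|'I_m|)%N by rewrite card_ord.
have [w0 omega_w0] := @bigop.eq_bigmax _ (fun w => #|holders f w|) card_gt0.
have T_lt_holders : T < #|holders f w0|%:R by rewrite -omega_w0.
apply: le_trans (binomial_ge_half_power kT T_lt_holders) _.
rewrite [X in _ <= X]mulrC; apply: ler_wpM2r; first exact: ler0n.
rewrite (bigD1 w0) //= lerDl; apply: sumr_ge0 => w _; exact: ler0n.
Qed.

(* Markov's inequality for the k-th binomial moments, summed over all m
   attributes: P(omega' > T) <= m (n E X / m)^k / (T/2)^k for T >= 2k. *)
Lemma omega_tail_bound (T : F) k : (0 < m)%N -> 0 < T -> 2 * k%:R <= T ->
  \sum_(f : {ffun 'I_n -> {set 'I_m}} | T < (omega' f)%:R) weight f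
  <= m%:R * (n%:R * (meanSize / m%:R)) ^+ k / (T / 2) ^+ k.
Proof.
move=> m_gt0 T_gt0 kT; set p := meanSize / m%:R.
have p_ge0 : 0 <= p by rewrite divr_ge0 ?meanSize_ge0 ?ler0n.
have halfT_gt0 : 0 < (T / 2) ^+ k by rewrite exprn_gt0 // divr_gt0.
have moment_sum : \sum_(f : {ffun 'I_n -> {set 'I_m}})
    \sum_(w : 'I_m) weight f * 'C(#|holders f w|, k)%:R = m%:R * ('C(n, k)%:R * p ^+ k).
  rewrite exchange_big /= (eq_bigr _ (fun w _ => binomial_moment w k)).
  by rewrite sumr_const card_ord [RHS]mulr_natl.
clearbody p; rewrite ler_pdivlMr // mulrC.
apply: (@le_trans _ _ (k`!%:R * (m%:R * ('C(n, k)%:R * p ^+ k)))).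
  rewrite -moment_sum !mulr_sumr [X in _ <= X](bigID (fun f => T < (omega' f)%:R)) /=.
  rewrite -[X in X <= _]addr0; apply: lerD; last first.
    apply: sumr_ge0 => f _; rewrite mulr_ge0 ?ler0n ?sumr_ge0 // => w _.
    by rewrite mulr_ge0 ?weight_ge0 ?ler0n.
  apply: ler_sum => f bad; rewrite -mulr_sumr mulrCA [leLHS]mulrC.
  apply: ler_wpM2l; first exact: weight_ge0.
  exact: large_omega_moment m_gt0 kT bad.
have binom_fact : 'C(n, k)%:R * k`!%:R <= n%:R ^+ k :> F.
  by rewrite -natrM bin_ffact -natrX ler_nat ffact_le_expn.
rewrite exprMn mulrCA; apply: ler_wpM2l; first exact: ler0n.
rewrite mulrA [_ * 'C(n, k)%:R]mulrC.
by apply: ler_wpM2r; rewrite ?exprn_ge0.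
Qed.
End RandomAttributeSets.

Lemma eventProb_omega_le n m (P : nat -> R) (T : R) : is_prob_on m P ->
  eventProb P (fun f : outcome n m => if Rle_dec (INR (omega' f)) T then true else false)
  = 1 - \sum_(f : outcome n m | T < (omega' f)%:R) weight P f.
Proof.
move=> [_ P_sum].
rewrite -[X in X - _](sum_weight P_sum n) (bigID (fun f => T < (omega' f)%:R)) /= addrC addrK.
apply: eq_big => [f | f _].
  by rewrite -INRE -leNgt; case: Rle_dec => h; apply/esym; [apply/RleP | apply/negP => /RleP].
by apply: eq_bigr => v _; rewrite RdivE INRE.
Qed.

Local Close Scope ring_scope.
Local Open Scope R_scope.
Delimit Scope R_scope with R.

Lemma EY_meanSize n m (P : nat -> R) : EY n m P = scaleY n m * meanSize m P.
Proof. by rewrite /EY /meanSize; congr (_ * _); apply: eq_bigr => k _; rewrite INRE mulrC. Qed.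

Lemma omega_le_prob_bound n m (P : nat -> R) (T : R) k :
  (0 < m)%nat -> is_prob_on m P -> 0 < T -> 2 * INR k <= T ->
  1 - INR m * (INR n * (meanSize m P / INR m)) ^ k / (T / 2) ^ k
  <= eventProb P (fun f : outcome n m => if Rle_dec (INR (omega' f)) T then true else false)
  <= 1.
Proof.
move=> m_gt0 Pm T_gt0 kT; have [P_ge0 P_sum] := Pm.
have {}P_ge0 := fun k => introT RleP (P_ge0 k).
have {}kT := introT RleP kT; rewrite INRE in kT.
have tail := omega_tail_bound P_ge0 P_sum n m_gt0 (introT RltP T_gt0) kT.
rewrite (eventProb_omega_le _ _ Pm); split; apply/RleP.
  by rewrite RminusE RdivE !RmultE !RpowE !INRE lerD2l lerN2; exact: tail.
by rewrite gerBl; apply: sumr_ge0 => f _; exact: weight_ge0.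
Qed.

Lemma Rpower_gt0 x y : 0 < Rpower x y.
Proof. exact: exp_pos. Qed.

Lemma nat_unbounded (z : R) : exists N : nat, z <= INR N.
Proof.
have [z_le0 | z_gt0] := Rle_or_lt z 0; first by exists 0%nat.
have [up_gt _] := archimed z.
exists (Z.to_nat (up z)); rewrite INR_IZR_INZ Z2Nat.id; first lra.
by apply: le_IZR; lra.
Qed.

Lemma Rpower_eventually_ge (e y : R) : 0 < e ->
  exists N : nat, forall n : nat, (N <= n)%nat -> y <= Rpower (INR n) e.
Proof.
move=> e_gt0; set z := Rpower (Rmax y 1) (/ e).
have [N zN] := nat_unbounded z; exists N => n /ssrnat.leP Nn.
have z_le_n : z <= INR n by apply: Rle_trans zN (le_INR _ _ Nn).
have y_le : y <= Rpower z e.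
  rewrite /z Rpower_mult Rinv_l ?Rpower_1; try lra.
    exact: Rmax_l.
  by apply: Rlt_le_trans (Rmax_r y 1); lra.
apply: Rle_trans y_le (Rle_Rpower_l _ _ _ _ _); first lra.
by split; [exact: Rpower_gt0 | exact: z_le_n].
Qed.

Lemma Rpower_eventually_lt (r eps : R) : r < 0 -> 0 < eps ->
  exists N : nat, forall n : nat, (N <= n)%nat -> Rpower (INR n) r < eps.
Proof.
move=> r_lt0 eps_gt0.
have [N large] := Rpower_eventually_ge (2 / eps) (Ropp_0_gt_lt_contravar _ r_lt0).
exists N => n /large n_large.
have two_eps_gt0 : 0 < 2 / eps by apply: Rdiv_lt_0_compat; lra.
rewrite -(Ropp_involutive r) Rpower_Ropp.
apply: Rle_lt_trans (Rinv_le_contravar _ _ _ n_large) _ => //.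
by rewrite Rinv_div; lra.
Qed.

Lemma Un_cv_one_of_deficit (u : nat -> R) (K rho : R) (N : nat) : rho < 0 ->
  (forall n : nat, (N <= n)%nat -> 1 - K * Rpower (INR n) rho <= u n <= 1) ->
  Un_cv u 1.
Proof.
move=> rho_lt0 bounds eps eps_gt0.
have K_le := Rle_abs K; have absK_ge0 := Rabs_pos K.
set eps' := eps / (Rabs K + 1).
have eps'_gt0 : 0 < eps' by apply: Rdiv_lt_0_compat; lra.
have eps'_eq : eps' * (Rabs K + 1) = eps by rewrite /eps'; field; lra.
have [N' small] := Rpower_eventually_lt rho_lt0 eps'_gt0.
exists (N + N')%nat => n /ssrnat.leP n_ge.
have [lo hi] := bounds n (leq_trans (leq_addr N' N) n_ge).
have := small n (leq_trans (leq_addl N N') n_ge).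
have := Rpower_gt0 (INR n) rho.
rewrite /R_dist Rabs_left1; nra.
Qed.

(* The exponents of the proof: with b = min(beta, 1), g = b + 1 - alpha > 0,
   delta = g/4 and j >= 2/g, the k = 2(j+1)-th moment bound decays like
   n^(b - g(j+1)/2). *)
Lemma exponents_exist (alpha beta : R) : 1 < alpha < 2 -> alpha - 1 < beta ->
  exists (b delta : R) (j : nat), b <= beta /\ 0 < delta /\
    0 < 1 - alpha / 2 - delta /\
    1 + (1 - b) * INR j - 2 * (1 - alpha / 2 - delta) * INR j.+1 < 0.
Proof.
move=> [alpha_gt1 alpha_lt2] beta_gt; set b := Rmin beta 1.
have b_le_beta : b <= beta by exact: Rmin_l.
have b_le1 : b <= 1 by exact: Rmin_r.
have g_gt0 : 0 < b + 1 - alpha.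
  by rewrite /b; apply: (Rmin_case beta 1 (fun x => 0 < x + 1 - alpha)); lra.
have [j j_large] := nat_unbounded (2 / (b + 1 - alpha)).
have gj : 2 <= (b + 1 - alpha) * INR j.
  apply: Rle_trans (Rmult_le_compat_l _ _ _ (Rlt_le _ _ g_gt0) j_large); right; field; lra.
exists b, ((b + 1 - alpha) / 4), j; rewrite S_INR; repeat split; lra.
Qed.

Lemma mean_degree_sq (nn M X C : R) : 0 < nn -> 0 < M -> 0 <= X ->
  sqrt (nn / M) * X <= C -> (nn * (X / M)) ^ 2 <= nn / M * C ^ 2.
Proof.
move=> nn_gt0 M_gt0 X_ge0 meanY_le; set x := nn / M.
have x_gt0 : 0 < x by apply: Rdiv_lt_0_compat.
have sqrtX_ge0 : 0 <= sqrt x * X by apply: Rmult_le_pos => //; exact: sqrt_pos.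
have -> : nn * (X / M) = sqrt x * (sqrt x * X).
  by rewrite -Rmult_assoc sqrt_sqrt /x; [field; lra | exact: Rlt_le].
rewrite Rpow_mult_distr pow2_sqrt; last lra.
by apply: Rmult_le_compat_l; [lra | apply: pow_incr].
Qed.

Lemma ratio_le_power (nn M c b : R) : 0 < nn -> 0 < c -> c * Rpower nn b <= M ->
  nn / M <= Rpower nn (1 - b) / c.
Proof.
move=> nn_gt0 c_gt0 M_ge; have nb_gt0 := Rpower_gt0 nn b.
have cnb_gt0 : 0 < c * Rpower nn b by apply: Rmult_lt_0_compat.
rewrite /Rminus Rpower_plus Rpower_1 // Rpower_Ropp.
have -> : nn * / Rpower nn b / c = nn / (c * Rpower nn b) by field; lra.
apply: Rmult_le_compat_l; first lra.
exact: Rinv_le_contravar.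
Qed.

Lemma tail_power_bound (nn M X C c b e : R) (j : nat) :
  0 < nn -> 0 <= X -> sqrt (nn / M) * X <= C -> 0 < c -> c * Rpower nn b <= M ->
  M * (nn * (X / M)) ^ (2 * j.+1) / (Rpower nn e / 2) ^ (2 * j.+1)
  <= (C ^ 2) ^ j.+1 * 4 ^ j.+1 / c ^ j * Rpower nn (1 + (1 - b) * INR j - 2 * e * INR j.+1).
Proof.
move=> nn_gt0 X_ge0 meanY_le c_gt0 M_ge.
have M_gt0 : 0 < M.
  by apply: Rlt_le_trans M_ge; apply: Rmult_lt_0_compat => //; exact: Rpower_gt0.
set x := nn / M; set Tk := Rpower nn (2 * e * INR j.+1).
have x_ge0 : 0 <= x by apply: Rlt_le; apply: Rdiv_lt_0_compat.
have Tk_gt0 : 0 < Tk by exact: Rpower_gt0.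
have power_T : (Rpower nn e / 2) ^ (2 * j.+1) = Tk / 4 ^ j.+1.
  rewrite /Rdiv Rpow_mult_distr pow_inv -Rpower_pow ?Rpower_mult ?mult_INR;
    last exact: Rpower_gt0.
  by rewrite pow_mult /Tk; congr (Rpower nn _ * / _ ^ _); simpl; ring.
have power_rhs : Rpower nn (1 + (1 - b) * INR j - 2 * e * INR j.+1)
                 = nn * Rpower nn (1 - b) ^ j / Tk.
  rewrite -Rpower_pow ?Rpower_mult; last exact: Rpower_gt0.
  by rewrite /Rminus !Rpower_plus Rpower_1 // Rpower_Ropp.
have moment_le : M * (nn * (X / M)) ^ (2 * j.+1) <= nn * x ^ j * (C ^ 2) ^ j.+1.
  rewrite pow_mult; apply: Rle_trans (_ : M * (x * C ^ 2) ^ j.+1 <= _).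
    apply: Rmult_le_compat_l; first lra.
    by apply: pow_incr; split; [exact: pow2_ge_0 | exact: mean_degree_sq].
  by rewrite Rpow_mult_distr /= /x; right; field; lra.
have ratio_pow : x ^ j <= (Rpower nn (1 - b) / c) ^ j.
  by apply: pow_incr; split => //; exact: ratio_le_power.
have four_gt0 : 0 < 4 ^ j.+1 by apply: pow_lt; lra.
have c_pow_gt0 : 0 < c ^ j by exact: pow_lt.
rewrite power_T power_rhs.
have -> : (C ^ 2) ^ j.+1 * 4 ^ j.+1 / c ^ j * (nn * Rpower nn (1 - b) ^ j / Tk)
          = nn * (Rpower nn (1 - b) / c) ^ j * (C ^ 2) ^ j.+1 * (4 ^ j.+1 / Tk).
  by rewrite /Rdiv Rpow_mult_distr pow_inv; field; lra.
have -> : M * (nn * (X / M)) ^ (2 * j.+1) / (Tk / 4 ^ j.+1)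
          = M * (nn * (X / M)) ^ (2 * j.+1) * (4 ^ j.+1 / Tk) by field; lra.
apply: Rmult_le_compat_r; first by apply: Rlt_le; apply: Rdiv_lt_0_compat.
apply: Rle_trans moment_le _.
apply: Rmult_le_compat_r; first by apply: pow_le; exact: pow2_ge_0.
by apply: Rmult_le_compat_l; lra.
Qed.

Lemma omega_le_power_prob n m (P : nat -> R) (C c b beta e : R) (j : nat) :
  (1 <= n)%nat -> (0 < m)%nat -> is_prob_on m P -> EY n m P <= C ->
  0 < c -> b <= beta -> c * Rpower (INR n) beta <= INR m ->
  2 * INR (2 * j.+1) <= Rpower (INR n) e ->
  1 - (C ^ 2) ^ j.+1 * 4 ^ j.+1 / c ^ j
        * Rpower (INR n) (1 + (1 - b) * INR j - 2 * e * INR j.+1)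
  <= eventProb P (fun f : outcome n m =>
       if Rle_dec (INR (omega' f)) (Rpower (INR n) e) then true else false)
  <= 1.
Proof.
move=> n_ge1 m_gt0 Pm EY_le c_gt0 b_le m_ge kT.
have n_ge1R : 1 <= INR n by apply: (le_INR 1); apply/ssrnat.leP.
have [lo hi] := omega_le_prob_bound n m_gt0 Pm (Rpower_gt0 (INR n) e) kT.
split => //; apply: Rle_trans lo; apply: Rplus_le_compat_l; apply: Ropp_le_contravar.
apply: tail_power_bound => //; first lra.
- by apply/RleP; apply: meanSize_ge0 => k; apply/RleP; case: Pm.
- by move: EY_le; rewrite EY_meanSize.
- apply: Rle_trans m_ge; apply: Rmult_le_compat_l; first lra.
  exact: Rle_Rpower.
Qed.

Theorem mainTheorem9 (alpha : R) (m : nat -> nat) (P : nat -> nat -> R) :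
  (1 < alpha < 2)%R ->
  (forall n, (0 < m n)%nat) ->
  (forall n, is_prob_on (m n) (P n)) ->
  (forall K, exists N, forall n, (N <= n)%nat -> (K <= m n)%nat) ->
  condA m P ->
  condPL alpha m P ->
  (exists beta : R, (alpha - 1 < beta)%R /\
     exists (c : R) (N : nat), (0 < c)%R /\
       forall n, (N <= n)%nat -> (c * Rpower (INR n) beta <= INR (m n))%R) ->
  exists delta : R, (0 < delta)%R /\
    Un_cv (fun n => eventProb (P n)
             (fun f : outcome n (m n) =>
                if Rle_dec (INR (omega' f)) (Rpower (INR n) (1 - alpha / 2 - delta))
                then true else false)) 1%R.
Proof.
move=> alpha_bounds m_gt0 P_prob _ [C [N1 EY_le]] _ [beta [beta_gt [c [N0 [c_gt0 m_ge]]]]].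
have [b [delta [j [b_le [delta_gt0 [e_gt0 rho_lt0]]]]]] := exponents_exist alpha_bounds beta_gt.
exists delta; split => //.
have [N2 T_large] := Rpower_eventually_ge (2 * INR (2 * j.+1)) e_gt0.
apply: (Un_cv_one_of_deficit (N := N0 + N1 + N2 + 1) rho_lt0) => n n_ge.
apply: (omega_le_power_prob (C := C) (c := c) (beta := beta)) => //.
- lia.
- apply: EY_le; lia.
- apply: m_ge; lia.
- apply: T_large; lia.
Qed.
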